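(* Let $n,k \in \mathbb{N}$ and let $f \colon \Delta_k^n \to \mathbb{R}$ be a $1$-concave function. Then for every $(i_1,\ldots,i_k) \in \Delta_k^n$, $$f(i_1,\ldots,i_k) \geq \sum_{j=1}^k \frac{i_j}{n} f(ne_j) \quad\text{and}\quad e^{f(i_1,\ldots,i_k)} \geq \prod_{j=1}^k \big(e^{f(ne_j)}\big)^{i_j/n},$$ where $e_1,\ldots,e_k$ are the standard basis vectors of $\mathbb{R}^k$.
   Context: $\Delta_k^n$ is the set of $I \in \mathbb{N}_0^k$ with $i_1+\cdots+i_k = n$. A function $f \colon \Delta_k^n \to \mathbb{R}$ is $1$-concave if for every $y \in \Delta_k^n$ and $j_1 \neq j_2$, with $L := \{s \in \mathbb{Z} : y + s(e_{j_1}-e_{j_2}) \in \Delta_k^n\}$ and $g(s) := f(y + s(e_{j_1}-e_{j_2}))$, one has $g(\sum_r\lambda_r s_r) \geq \sum_r \lambda_r g(s_r)$ whenever $s_r \in L$, $\lambda_r \geq 0$, $\sum_r\lambda_r = 1$, $\sum_r \lambda_r s_r \in L$. *)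

From HB Require Import structures.
From mathcomp Require Import all_boot all_order all_algebra.
From mathcomp Require Import all_classical all_reals.
From mathcomp Require Import sequences exp.
Set Implicit Arguments. Unset Strict Implicit. Unset Printing Implicit Defensive.
Import Order.TTheory GRing.Theory Num.Theory.
Local Open Scope ring_scope.

Definition simplex (k n : nat) (x : 'I_k -> int) : Prop :=
  (forall i, 0 <= x i) /\ \sum_(i < k) x i = n%:Z.

Definition shiftv (k : nat) (y : 'I_k -> int) (j1 j2 : 'I_k) (s : int) : 'I_k -> int :=
  fun i => y i + s * ((i == j1)%:Z - (i == j2)%:Z).

Definition nbasis (k n : nat) (j : 'I_k) : 'I_k -> int :=
  fun i => (i == j)%:Z * n%:Z.

(* 1-concavity of f : Delta_k^n -> R (f given on all of Z^k; only its
   values on Delta_k^n matter). *)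
Definition one_concave (R : realType) (k n : nat) (f : ('I_k -> int) -> R) : Prop :=
  forall y : 'I_k -> int, simplex n y ->
  forall j1 j2 : 'I_k, j1 != j2 ->
  forall (m : nat) (s : 'I_m -> int) (lam : 'I_m -> R),
    (forall r, simplex n (shiftv y j1 j2 (s r))) ->
    (forall r, 0 <= lam r) ->
    \sum_(r < m) lam r = 1 ->
    forall t : int,
      t%:~R = \sum_(r < m) lam r * (s r)%:~R ->
      simplex n (shiftv y j1 j2 t) ->
      \sum_(r < m) lam r * f (shiftv y j1 j2 (s r)) <= f (shiftv y j1 j2 t).

From HB Require Import structures.
From mathcomp Require Import all_boot all_order all_algebra.
From mathcomp Require Import all_classical all_reals.
From mathcomp Require Import sequences exp.
From mathcomp Require Import ring.
Import Order.TTheory GRing.Theory Num.Theory.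
Set Implicit Arguments. Unset Strict Implicit. Unset Printing Implicit Defensive.
Local Open Scope ring_scope.

(* Induction on the size of the support of x.  If x has two nonzero
   coordinates j1, j2, the line through x in direction e_j1 - e_j2 meets the
   simplex in a segment whose endpoints a, b have smaller support, and x is
   the convex combination x_j1/(x_j1+x_j2) a + x_j2/(x_j1+x_j2) b.  Concavity
   along that line and the induction hypothesis at a and b give the bound at
   x, because the right-hand side of the bound is linear in the point. *)

Lemma sum_indicator k (j : 'I_k) : \sum_(i < k) ((i == j)%:Z) = 1.
Proof. by rewrite (bigD1 j) //= eqxx big1 ?addr0 // => i /negbTE ->. Qed.

Lemma shiftv0 k (y : 'I_k -> int) j1 j2 : shiftv y j1 j2 0 = y.
Proof. by apply: funext => i; rewrite /shiftv mul0r addr0. Qed.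

Lemma shiftvN k (y : 'I_k -> int) j1 j2 s :
  shiftv y j1 j2 (- s) = shiftv y j2 j1 s.
Proof. by apply: funext => i; rewrite /shiftv mulNr -mulrN opprB. Qed.

Lemma shiftv_coord k (y : 'I_k -> int) j1 j2 s i : j1 != j2 ->
  shiftv y j1 j2 s i =
  if i == j1 then y i + s else if i == j2 then y i - s else y i.
Proof.
move=> j12; rewrite /shiftv.
have [->|ij1] := eqVneq i j1; first by rewrite (negbTE j12) subr0 mulr1.
have [->|ij2] := eqVneq i j2; first by rewrite sub0r mulrN1.
by rewrite subrr mulr0 addr0.
Qed.

Lemma simplex_shiftv k n (y : 'I_k -> int) j1 j2 s :
  simplex n y -> j1 != j2 -> 0 <= y j1 + s -> 0 <= y j2 - s ->
  simplex n (shiftv y j1 j2 s).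
Proof.
move=> [y_ge0 y_sum] j12 h1 h2; split.
  by move=> i; rewrite shiftv_coord //; do 2?case: eqP => [->|_] //.
by rewrite /shiftv big_split /= -mulr_sumr sumrB !sum_indicator subrr mulr0 addr0.
Qed.

Definition supp {k} (x : 'I_k -> int) : {set 'I_k} := [set i | x i != 0].

Lemma card_supp_shiftv_lt k (x : 'I_k -> int) j1 j2 :
  j1 != j2 -> x j1 != 0 -> x j2 != 0 ->
  (#|supp (shiftv x j1 j2 (x j2))| < #|supp x|)%N.
Proof.
move=> j12 xj1 xj2; apply: (@leq_ltn_trans #|supp x :\ j2|).
  apply/subset_leq_card/fintype.subsetP => i; rewrite !inE shiftv_coord //.
  have [-> _|ij1] := eqVneq i j1; first by rewrite j12 xj1.
  by have [->|] := eqVneq i j2; rewrite ?subrr ?eqxx.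
by rewrite (cardsD1 j2 (supp x)) inE xj2.
Qed.

Lemma simplex_supp_le1 k n (x : 'I_k -> int) : (0 < n)%N -> simplex n x ->
  (#|supp x| <= 1)%N -> exists j, x = nbasis n j.
Proof.
move=> n_gt0 [_ x_sum] supp_le1.
have [j xj] : exists j, x j != 0.
  apply/existsP; apply: contraTT n_gt0; rewrite negb_exists => /forallP x0.
  have : \sum_(i < k) x i = 0.
    by rewrite big1 // => i _; apply/eqP; move: (x0 i); rewrite negbK.
  by rewrite x_sum => -[->].
have suppE : supp x = [set j].
  by apply/eqP; rewrite eq_sym eqEcard finset.sub1set inE xj cards1.
have x_off i : i != j -> x i = 0.
  move=> ij; apply/eqP; apply: contraNT ij => xi.
  by rewrite -finset.in_set1 -suppE inE.
exists j; apply: funext => i; rewrite /nbasis.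
have [->|/x_off -> //] := eqVneq i j.
by rewrite mul1r -x_sum (bigD1 j) //= big1 ?addr0 // => i' /x_off.
Qed.

Section VertexInterpolation.
Variables (R : realType) (k n : nat) (f : ('I_k -> int) -> R).

Definition vertex_interp (x : 'I_k -> int) : R :=
  \sum_(j < k) ((x j)%:~R / n%:R) * f (nbasis n j).

Lemma vertex_interp_nbasis j :
  (0 < n)%N -> vertex_interp (nbasis n j) = f (nbasis n j).
Proof.
move=> n_gt0; rewrite /vertex_interp (bigD1 j) //= big1 ?addr0.
  by rewrite /nbasis eqxx mul1r divff ?mul1r // pnatr_eq0 -lt0n.
by move=> i ij; rewrite /nbasis (negbTE ij) !mul0r.
Qed.

Lemma vertex_interp_combination (a b x : 'I_k -> int) (la lb : R) :
  (forall i, la * (a i)%:~R + lb * (b i)%:~R = (x i)%:~R) ->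
  la * vertex_interp a + lb * vertex_interp b = vertex_interp x.
Proof.
move=> comb; rewrite /vertex_interp !mulr_sumr -big_split /=.
by apply: eq_bigr => j _; rewrite -comb; ring.
Qed.

Lemma one_concave_segment (x : 'I_k -> int) j1 j2 (p q : int) :
  one_concave n f -> simplex n x -> j1 != j2 -> 0 < p -> 0 < q ->
  simplex n (shiftv x j1 j2 p) -> simplex n (shiftv x j1 j2 (- q)) ->
  q%:~R / (p + q)%:~R * f (shiftv x j1 j2 p) +
  p%:~R / (p + q)%:~R * f (shiftv x j1 j2 (- q)) <= f x.
Proof.
move=> f_conc sx j12 p_gt0 q_gt0 sa sb.
have pq0 : (p + q)%:~R != 0 :> R by rewrite intr_eq0 lt0r_neq0 ?addr_gt0.
pose s (r : 'I_2) := if r == ord0 then p else - q.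
pose lam (r : 'I_2) : R := if r == ord0 then q%:~R / (p + q)%:~R else p%:~R / (p + q)%:~R.
have := f_conc x sx j1 j2 j12 2 s lam _ _ _ 0 _ _.
rewrite shiftv0 !big_ord_recl !big_ord0 /= !addr0; apply.
- by move=> r; rewrite /s; case: ifP.
- by move=> r; rewrite /lam; case: ifP => _;
    rewrite divr_ge0 // ler0z ?addr_ge0 // ltW.
- by rewrite /lam /= intrD; field; rewrite -intrD.
- by rewrite /lam /s /= intrN intrD; field; rewrite -intrD.
- exact: sx.
Qed.

Lemma vertex_interp_supp_le1 (x : 'I_k -> int) :
  (0 < n)%N -> simplex n x -> (#|supp x| <= 1)%N -> vertex_interp x = f x.
Proof.
move=> n_gt0 sx /(simplex_supp_le1 n_gt0 sx) [j ->].
exact: vertex_interp_nbasis.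
Qed.

Lemma vertex_interp_le_supp (m : nat) (x : 'I_k -> int) :
  (0 < n)%N -> one_concave n f -> simplex n x -> (#|supp x| <= m)%N ->
  vertex_interp x <= f x.
Proof.
move=> n_gt0 f_conc; elim: m x => [|m IH] x sx supp_le.
  by rewrite vertex_interp_supp_le1 // (leq_trans supp_le).
have [/(vertex_interp_supp_le1 n_gt0 sx) -> //|] := leqP #|supp x| 1.
move=> /card_gt1P [j1 [j2 [+ + j12]]].
rewrite !inE => xj1 xj2.
have [x_ge0 _] := sx.
have p_gt0 : 0 < x j2 by rewrite lt0r xj2 x_ge0.
have q_gt0 : 0 < x j1 by rewrite lt0r xj1 x_ge0.
set a := shiftv x j1 j2 (x j2); set b := shiftv x j1 j2 (- x j1).
have sa : simplex n a.
  by apply: simplex_shiftv; rewrite // ?subrr // addr_ge0 ?x_ge0.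
have sb : simplex n b.
  by apply: simplex_shiftv; rewrite // ?subrr // opprK addr_ge0 ?x_ge0.
have IHa : vertex_interp a <= f a.
  by apply: IH => //; rewrite -ltnS (leq_trans _ supp_le) ?card_supp_shiftv_lt.
have IHb : vertex_interp b <= f b.
  apply: IH => //; rewrite -ltnS (leq_trans _ supp_le) // /b shiftvN.
  by rewrite card_supp_shiftv_lt // eq_sym.
apply: le_trans (one_concave_segment f_conc sx j12 p_gt0 q_gt0 sa sb).
have pq0 : (x j2 + x j1)%:~R != 0 :> R by rewrite intr_eq0 lt0r_neq0 ?addr_gt0.
have pq_ge0 : 0 <= (x j2 + x j1)%:~R :> R by rewrite ler0z addr_ge0 ?x_ge0.
have comb : (x j1)%:~R / (x j2 + x j1)%:~R * vertex_interp a +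
            (x j2)%:~R / (x j2 + x j1)%:~R * vertex_interp b = vertex_interp x.
  apply: vertex_interp_combination => i; rewrite /a /b !shiftv_coord //.
  by do 2?case: eqP => _; rewrite ?intrD ?intrB ?intrN; field; rewrite -intrD.
by rewrite -comb lerD // ler_wpM2l // divr_ge0 // ler0z x_ge0.
Qed.

End VertexInterpolation.

Unset Implicit Arguments.

Theorem lemma4p9 (R : realType) (n k : nat) (f : ('I_k -> int) -> R) :
  (0 < n)%N -> one_concave n f ->
  forall x : 'I_k -> int, simplex n x ->
    \sum_(j < k) ((x j)%:~R / n%:R) * f (nbasis n j) <= f x /\
    \prod_(j < k) (expR (f (nbasis n j))) `^ ((x j)%:~R / n%:R) <= expR (f x).
Proof.
move=> n_gt0 f_conc x sx.
have interp_le := vertex_interp_le_supp n_gt0 f_conc sx (leqnn _).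
split=> //.
under eq_bigr => j _ do rewrite -expRM mulrC.
by rewrite -expR_sum ler_expR.
Qed.
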